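(* There is a constant $C>0$ such that the following holds. For a positive integer $l$, set $\epsilon=2^{-2l}$, $N=\lceil 5.34\ln(4l\cdot 2^{2l})\rceil$, and $n=2N(2^l-1)$ (the total number of uses of $U_\theta$). For every $\theta\in[0,1)$, let $\hat\theta$ be the estimate produced by the following procedure: for $k=1,\dots,l$ let $N_{x,k}\sim\mathrm{Bin}\big(N,(1+\cos(2\pi 2^{k-1}\theta))/2\big)$, $N_{y,k}\sim\mathrm{Bin}\big(N,(1+\sin(2\pi 2^{k-1}\theta))/2\big)$, all independent; $t_k=\frac{1}{2\pi}\big(\mathrm{atan2}(2N_{y,k}/N-1,2N_{x,k}/N-1)\big)_{\mathrm{mod}\,2\pi}$, $x(k)=(t_k-1/6)_{\mathrm{mod}\,1}$; $z(1)=x(1)$ and for $k=1,\dots,l-1$, with $d_k=(x(k+1)-2z(k))_{\mathrm{mod}\,1}$: $z(k+1)=2z(k)+d_k$ if $d_k\in[0,1/3)$, $2z(k)+1/3$ if $d_k\in[1/3,2/3)$, $2z(k)$ if $d_k\in[2/3,1)$; finally $\hat\theta=\big((z(l)+1/6)/2^{l-1}\big)_{\mathrm{mod}\,1}$. Then $$1-\mathbb{E}\big[F(U_{\hat\theta},U_\theta)\big]\le C\Big(\frac{\ln n}{n}\Big)^2 .$$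
   Context: $U_\theta=\mathrm{diag}(1,e^{i2\pi\theta})$ for $\theta\in[0,1)$, and the fidelity is $F(U_{\hat\theta},U_\theta)=|\mathrm{tr}(U_{\hat\theta}^{-1}U_\theta)|^2/4$. The binomial counts model, at stage $k$, $N$ measurements each with the POVMs $\{|\psi_x\rangle\langle\psi_x|,\mathbb{I}-|\psi_x\rangle\langle\psi_x|\}$ and $\{|\psi_y\rangle\langle\psi_y|,\mathbb{I}-|\psi_y\rangle\langle\psi_y|\}$ ($|\psi_x\rangle=(|0\rangle+|1\rangle)/\sqrt2$, $|\psi_y\rangle=(|0\rangle+i|1\rangle)/\sqrt2$) of $U_\theta^{2^{k-1}}|\psi_x\rangle$. $(a)_{\mathrm{mod}\,c}$ is the representative of $a$ in $[0,c)$; $\mathrm{atan2}$ is the polar angle (any fixed convention at $(0,0)$). The expectation is over the measurement outcomes; $C$ does not depend on $\theta$ or $l$. *)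

From Stdlib Require Import Reals Lra List.
Open Scope R_scope.

(* floor and ceiling; Int_part is the floor (Int_part x <= x < Int_part x + 1) *)
Definition rfloor (x : R) : Z := Int_part x.
Definition rceil (x : R) : Z := (- Int_part (- x))%Z.

Definition rmod (a c : R) : R := a - c * IZR (rfloor (a / c)).

(* polar angle of (x,y), values in (-PI, PI]; convention atan2 0 0 = 0 *)
Definition atan2 (y x : R) : R :=
  if Rlt_dec 0 x then atan (y / x)
  else if Rlt_dec x 0 then
    (if Rle_dec 0 y then atan (y / x) + PI else atan (y / x) - PI)
  else if Rlt_dec 0 y then PI / 2
  else if Rlt_dec y 0 then - (PI / 2)
  else 0.

(* Fidelity F(U_a,U_th) = |tr(U_a^{-1} U_th)|^2/4 with U_t = diag(1, e^{i 2 pi t}):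
   tr(U_a^{-1} U_th) = 1 + e^{i 2 pi (th - a)}; |.|^2 written via real/imag parts. *)
Definition fidelity (a th : R) : R :=
  ((1 + cos (2 * PI * (th - a))) ^ 2 + (sin (2 * PI * (th - a))) ^ 2) / 4.

Definition binpmf (N : nat) (p : R) (k : nat) : R :=
  Binomial.C N k * p ^ k * (1 - p) ^ (N - k).

Definition Nsamp (l : nat) : nat :=
  Z.to_nat (rceil (534 / 100 * ln (4 * INR l * 2 ^ (2 * l)))).
Definition nuses (l : nat) : nat := 2 * Nsamp l * (2 ^ l - 1).

Definition tval (N : nat) (nx ny : nat) : R :=
  rmod (atan2 (2 * INR ny / INR N - 1) (2 * INR nx / INR N - 1)) (2 * PI) / (2 * PI).
Definition xval (N : nat) (c : nat * nat) : R :=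
  rmod (tval N (fst c) (snd c) - 1 / 6) 1.

Definition zstep (z x : R) : R :=
  let d := rmod (x - 2 * z) 1 in
  if Rlt_dec d (1 / 3) then 2 * z + d
  else if Rlt_dec d (2 / 3) then 2 * z + 1 / 3
  else 2 * z.

(* estimate from the list of counts [(N_{x,1},N_{y,1}); ...; (N_{x,l},N_{y,l})] *)
Definition estimate (N l : nat) (cs : list (nat * nat)) : R :=
  let xs := map (xval N) cs in
  let zl := fold_left zstep (tl xs) (hd 0 xs) in
  rmod ((zl + 1 / 6) / 2 ^ (l - 1)) 1.

Fixpoint expect (N : nat) (phs : list R) (f : list (nat * nat) -> R) : R :=
  match phs with
  | nil => f nil
  | ph :: rest =>
      sum_f_R0 (fun nx =>
        sum_f_R0 (fun ny =>
          binpmf N ((1 + cos (2 * PI * ph)) / 2) nx *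
          binpmf N ((1 + sin (2 * PI * ph)) / 2) ny *
          expect N rest (fun tl => f ((nx, ny) :: tl))) N) N
  end.

Definition phases (l : nat) (th : R) : list R :=
  map (fun k => 2 ^ (k - 1) * th) (seq 1 l).

Definition expected_fidelity (l : nat) (th : R) : R :=
  expect (Nsamp l) (phases l th)
    (fun cs => fidelity (estimate (Nsamp l) l cs) th).

(* By Hoeffding's
   inequality a frequency [n / N] strays by [sqrt (3/32)] from its mean with probability at most
   [2 exp (-3N/16)], and the choice of [N] makes the union bound over all [2l] counts at most
   [1 / 4^l].  When no count strays, every [x(k)] lies within [1/6] of [2^(k-1) th - 1/6]
   modulo 1; the three-way update keeps [z(k)] within [1/6] of [2^(k-1) th - 1/6] modulo
   [2^(k-1)] (the integer part merely doubles), so [th_hat] is within [1/(3 2^l)] of [th]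
   modulo 1 and [1 - F <= PI^2 (th - th_hat)^2 <= 2 / 4^l].  Hence [1 - E F <= 3 / 4^l], and
   [4^-l] is of order [(ln n / n)^2] because [n] is of order [l 2^l] and [ln n] of order [l]. *)

From Stdlib Require Import Reals Lra Lia List ZArith.
From Coquelicot Require Import Coquelicot.
Open Scope R_scope.

Lemma exp_le_exp x y : x <= y -> exp x <= exp y.
Proof.
  intros [Hlt | ->]; [now left; apply exp_increasing | lra].
Qed.

Lemma exp_mult_INR x k : exp (x * INR k) = exp x ^ k.
Proof.
  induction k as [| k IH]; [now rewrite Rmult_0_r, exp_0 |].
  now rewrite S_INR, Rmult_plus_distr_l, Rmult_1_r, exp_plus, IH, Rmult_comm.
Qed.

Lemma mvt_everywhere f df a b : (forall x, is_derive f x (df x)) ->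
  exists c, Rmin a b <= c <= Rmax a b /\ f b - f a = df c * (b - a).
Proof.
  intros Hf. apply MVT_gen; [now intros |].
  intros x _. apply derivable_continuous_pt. exists (df x). now apply is_derive_Reals.
Qed.

Lemma nonneg_of_convex_flat_at_0 g g1 g2 x :
  (forall y, is_derive g y (g1 y)) -> (forall y, is_derive g1 y (g2 y)) ->
  (forall y, 0 <= g2 y) -> g 0 = 0 -> g1 0 = 0 -> 0 <= g x.
Proof.
  intros Dg Dg1 Hg2 g_0 g1_0.
  destruct (mvt_everywhere g g1 0 x Dg) as [c [Hc Eg]].
  destruct (mvt_everywhere g1 g2 0 c Dg1) as [d [_ Eg1]].
  assert (0 <= c * x) by (unfold Rmin, Rmax in Hc; destruct Rle_dec; nra).
  pose proof (Hg2 d). nra.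
Qed.

Lemma hoeffding_lemma p lam : 0 <= p <= 1 ->
  1 - p + p * exp lam <= exp (lam * p + lam ^ 2 / 8).
Proof.
  intros Hp.
  set (D := fun x => 1 - p + p * exp x).
  assert (HD : forall x, 0 < D x).
  { intros x; unfold D; pose proof (exp_pos x); destruct (Rle_dec 1 (exp x)); nra. }
  assert (D_0 : D 0 = 1) by (unfold D; rewrite exp_0; ring).
  set (g := fun x => x * p + x ^ 2 / 8 - ln (D x)).
  (* [g 0 = g' 0 = 0] and [g'' = 1/4 - q (1 - q) >= 0] with [q = p e^x / D x]. *)
  assert (Hg : 0 <= g lam).
  { apply (nonneg_of_convex_flat_at_0 g (fun x => p + x / 4 - p * exp x / D x)
             (fun x => 1 / 4 - p * exp x * (1 - p) / D x ^ 2)).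
    - intros x; specialize (HD x); unfold g, D in *; auto_derive; [lra | field; lra].
    - intros x; specialize (HD x); unfold D in *; auto_derive; [lra | field; lra].
    - intros x; specialize (HD x); unfold D in *.
      replace (1 / 4 - p * exp x * (1 - p) / (1 - p + p * exp x) ^ 2)
        with ((p * exp x - (1 - p)) ^ 2 / (4 * (1 - p + p * exp x) ^ 2)) by (field; lra).
      apply Rmult_le_pos; [apply pow2_ge_0 | left; apply Rinv_0_lt_compat; nra].
    - unfold g; rewrite D_0, ln_1; simpl; lra.
    - rewrite D_0, exp_0; lra. }
  unfold g in Hg; fold (D lam); rewrite <- (exp_ln (D lam)) by apply HD.
  apply exp_le_exp; lra.
Qed.

Lemma one_sub_cos_le y : 1 - cos y <= y ^ 2 / 2.
Proof.
  enough (0 <= y ^ 2 / 2 - 1 + cos y) by lra.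
  apply (nonneg_of_convex_flat_at_0 (fun y => y ^ 2 / 2 - 1 + cos y)
           (fun y => y - sin y) (fun y => 1 - cos y)).
  - intros x; auto_derive; [easy | field].
  - intros x; auto_derive; [easy | ring].
  - intros x; pose proof (COS_bound x); lra.
  - rewrite cos_0; simpl; lra.
  - rewrite sin_0; lra.
Qed.

Lemma binpmf_nonneg N p k : 0 <= p <= 1 -> 0 <= binpmf N p k.
Proof.
  intros Hp. unfold binpmf, Binomial.C.
  assert (0 < INR (fact k) * INR (fact (N - k))).
  { apply Rmult_lt_0_compat; apply lt_0_INR, lt_O_fact. }
  repeat apply Rmult_le_pos; try apply pow_le; try lra.
  - apply pos_INR.
  - left; now apply Rinv_0_lt_compat.
Qed.

Lemma binpmf_sum N p : sum_f_R0 (binpmf N p) N = 1.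
Proof.
  unfold binpmf. rewrite <- binomial. replace (p + (1 - p)) with 1 by ring. apply pow1.
Qed.

Lemma binpmf_mgf N p lam :
  sum_f_R0 (fun k => binpmf N p k * exp (lam * INR k)) N = (1 - p + p * exp lam) ^ N.
Proof.
  replace (1 - p + p * exp lam) with (p * exp lam + (1 - p)) by ring.
  rewrite binomial. apply sum_eq. intros k _. unfold binpmf.
  rewrite exp_mult_INR, Rpow_mult_distr. ring.
Qed.

Lemma binpmf_chernoff N p lam s : 0 <= p <= 1 ->
  sum_f_R0 (fun k => binpmf N p k * exp (lam * (INR k - INR N * s))) N
  <= exp (INR N * (lam * (p - s) + lam ^ 2 / 8)).
Proof.
  intros Hp.
  rewrite (sum_eq _ (fun k => binpmf N p k * exp (lam * INR k) * exp (- (lam * INR N * s))))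
    by (intros k _; rewrite Rmult_assoc, <- exp_plus; f_equal; f_equal; ring).
  rewrite <- scal_sum, binpmf_mgf.
  replace (INR N * (lam * (p - s) + lam ^ 2 / 8))
    with (INR N * (lam * p + lam ^ 2 / 8) + - (lam * INR N * s)) by ring.
  rewrite exp_plus, (Rmult_comm (INR N)), exp_mult_INR, (Rmult_comm (exp _ ^ N)).
  apply Rmult_le_compat_l; [left; apply exp_pos |].
  apply pow_incr. split; [| now apply hoeffding_lemma].
  pose proof (exp_pos lam); destruct (Rle_dec 1 (exp lam)); nra.
Qed.

Definition deviates (N : nat) (p u : R) (k : nat) : R :=
  if Rle_dec u ((INR k / INR N - p) ^ 2) then 1 else 0.

Lemma binpmf_deviation N p u : (0 < N)%nat -> 0 <= p <= 1 -> 0 < u ->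
  sum_f_R0 (fun k => binpmf N p k * deviates N p u k) N <= 2 * exp (- (2 * INR N * u)).
Proof.
  intros HN Hp Hu.
  assert (HNr : 0 < INR N) by (apply lt_0_INR; lia).
  set (t := sqrt u).
  assert (Ht : 0 < t) by now apply sqrt_lt_R0.
  assert (Ht2 : t * t = u) by now apply sqrt_sqrt; lra.
  set (lam := 4 * t).
  assert (Hind : forall k, deviates N p u k <=
      exp (lam * (INR k - INR N * (p + t))) + exp (- lam * (INR k - INR N * (p - t)))).
  { intros k; unfold deviates.
    pose proof (exp_pos (lam * (INR k - INR N * (p + t)))).
    pose proof (exp_pos (- lam * (INR k - INR N * (p - t)))).
    destruct Rle_dec as [Hdev |]; [| lra].
    assert (Hk : INR k = INR N * (INR k / INR N)) by (field; lra).
    destruct (Rle_dec t (INR k / INR N - p)).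
    - pose proof (exp_ineq1_le (lam * (INR k - INR N * (p + t)))).
      assert (0 <= INR k - INR N * (p + t)) by (rewrite Hk; nra).
      assert (0 <= lam * (INR k - INR N * (p + t))) by (unfold lam; nra). lra.
    - pose proof (exp_ineq1_le (- lam * (INR k - INR N * (p - t)))).
      assert (INR k / INR N - p <= - t) by nra.
      assert (INR k - INR N * (p - t) <= 0) by (rewrite Hk; nra).
      assert (0 <= - lam * (INR k - INR N * (p - t))) by (unfold lam; nra). lra. }
  apply Rle_trans with (sum_f_R0 (fun k =>
    binpmf N p k * exp (lam * (INR k - INR N * (p + t))) +
    binpmf N p k * exp (- lam * (INR k - INR N * (p - t)))) N).
  { apply sum_Rle; intros k _. rewrite <- Rmult_plus_distr_l.
    apply Rmult_le_compat_l; [now apply binpmf_nonneg | apply Hind]. }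
  rewrite plus_sum.
  pose proof (binpmf_chernoff N p lam (p + t) Hp) as Hupper.
  pose proof (binpmf_chernoff N p (- lam) (p - t) Hp) as Hlower.
  replace (INR N * (lam * (p - (p + t)) + lam ^ 2 / 8)) with (- (2 * INR N * u))
    in Hupper by (unfold lam; rewrite <- Ht2; field).
  replace (INR N * (- lam * (p - (p - t)) + (- lam) ^ 2 / 8)) with (- (2 * INR N * u))
    in Hlower by (unfold lam; rewrite <- Ht2; field).
  lra.
Qed.

Lemma sum_affine (a f : nat -> R) s c N :
  sum_f_R0 (fun i => a i * (s * f i + c)) N
  = s * sum_f_R0 (fun i => a i * f i) N + c * sum_f_R0 a N.
Proof. induction N as [| N IH]; simpl; [| rewrite IH]; ring. Qed.

Definition pcos (ph : R) : R := (1 + cos (2 * PI * ph)) / 2.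
Definition psin (ph : R) : R := (1 + sin (2 * PI * ph)) / 2.

Lemma pcos_bounds ph : 0 <= pcos ph <= 1.
Proof. unfold pcos. pose proof (COS_bound (2 * PI * ph)). lra. Qed.

Lemma psin_bounds ph : 0 <= psin ph <= 1.
Proof. unfold psin. pose proof (SIN_bound (2 * PI * ph)). lra. Qed.

Lemma expect_cons N ph phs f :
  expect N (ph :: phs) f =
  sum_f_R0 (fun nx => binpmf N (pcos ph) nx *
    sum_f_R0 (fun ny => binpmf N (psin ph) ny *
      expect N phs (fun cs => f ((nx, ny) :: cs))) N) N.
Proof.
  cbn [expect]. apply sum_eq; intros nx _. rewrite scal_sum.
  apply sum_eq; intros ny _. unfold pcos, psin. ring.
Qed.

Lemma expect_affine N phs : forall f s c,
  expect N phs (fun cs => s * f cs + c) = s * expect N phs f + c.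
Proof.
  induction phs as [| ph phs IH]; intros f s c; [reflexivity |].
  rewrite !expect_cons.
  rewrite (sum_eq _ (fun nx => binpmf N (pcos ph) nx * (s *
     sum_f_R0 (fun ny => binpmf N (psin ph) ny *
       expect N phs (fun cs => f ((nx, ny) :: cs))) N + c))).
  - now rewrite sum_affine, binpmf_sum, Rmult_1_r.
  - intros nx _. f_equal.
    rewrite (sum_eq _ (fun ny => binpmf N (psin ph) ny *
       (s * expect N phs (fun cs => f ((nx, ny) :: cs)) + c))) by (intros; now rewrite IH).
    now rewrite sum_affine, binpmf_sum, Rmult_1_r.
Qed.

Lemma expect_mono N phs : forall f g,
  (forall cs, length cs = length phs -> f cs <= g cs) ->
  expect N phs f <= expect N phs g.
Proof.
  induction phs as [| ph phs IH]; intros f g Hfg; [now apply Hfg |].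
  rewrite !expect_cons.
  apply sum_Rle; intros nx _. apply Rmult_le_compat_l; [apply binpmf_nonneg, pcos_bounds |].
  apply sum_Rle; intros ny _. apply Rmult_le_compat_l; [apply binpmf_nonneg, psin_bounds |].
  apply IH. intros cs Hcs. apply Hfg. simpl; lia.
Qed.

Lemma expect_ext N phs f g : (forall cs, f cs = g cs) -> expect N phs f = expect N phs g.
Proof.
  intros Hfg. apply Rle_antisym; apply expect_mono; intros cs _; rewrite Hfg; lra.
Qed.

Fixpoint failures (N : nat) (phs : list R) (cs : list (nat * nat)) : R :=
  match phs, cs with
  | ph :: phs', (nx, ny) :: cs' =>
      deviates N (pcos ph) (3 / 32) nx + deviates N (psin ph) (3 / 32) ny + failures N phs' cs'
  | _, _ => 0
  end.

Lemma expect_failures N phs : (0 < N)%nat ->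
  expect N phs (failures N phs) <= INR (length phs) * (4 * exp (- (2 * INR N * (3 / 32)))).
Proof.
  intros HN. induction phs as [| ph phs IH]; [simpl; lra |].
  set (F := expect N phs (failures N phs)) in IH.
  rewrite expect_cons.
  rewrite (sum_eq _ (fun nx => binpmf N (pcos ph) nx *
     (1 * deviates N (pcos ph) (3 / 32) nx +
      (sum_f_R0 (fun ny => binpmf N (psin ph) ny * deviates N (psin ph) (3 / 32) ny) N + F)))).
  2:{ intros nx _. f_equal.
      rewrite (sum_eq _ (fun ny => binpmf N (psin ph) ny *
         (1 * deviates N (psin ph) (3 / 32) ny + (deviates N (pcos ph) (3 / 32) nx + F)))).
      - rewrite sum_affine, binpmf_sum. ring.
      - intros ny _. f_equal.
        transitivity (1 * F +
          (deviates N (pcos ph) (3 / 32) nx + deviates N (psin ph) (3 / 32) ny)); [| ring].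
        unfold F. rewrite <- expect_affine. apply expect_ext. intros cs. simpl. ring. }
  rewrite sum_affine, binpmf_sum.
  pose proof (binpmf_deviation N (pcos ph) (3 / 32) HN (pcos_bounds ph) ltac:(lra)).
  pose proof (binpmf_deviation N (psin ph) (3 / 32) HN (psin_bounds ph) ltac:(lra)).
  rewrite length_cons, S_INR. lra.
Qed.

Lemma cos_add_2PI_IZR x m : cos (x + 2 * PI * IZR m) = cos x.
Proof.
  destruct (Z_le_gt_dec 0 m) as [Hm | Hm].
  - rewrite <- (Z2Nat.id m Hm), <- INR_IZR_INZ.
    replace (x + 2 * PI * INR (Z.to_nat m)) with (x + 2 * INR (Z.to_nat m) * PI) by ring.
    apply cos_period.
  - replace (IZR m) with (- INR (Z.to_nat (- m)))
      by (rewrite INR_IZR_INZ, Z2Nat.id, opp_IZR by lia; ring).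
    rewrite <- (cos_period (x + 2 * PI * - INR (Z.to_nat (- m))) (Z.to_nat (- m))).
    f_equal; ring.
Qed.

Lemma sin_add_2PI_IZR x m : sin (x + 2 * PI * IZR m) = sin x.
Proof.
  rewrite !sin_cos, <- Rplus_assoc, cos_add_2PI_IZR; reflexivity.
Qed.

Lemma atan2_polar a b : a <> 0 \/ b <> 0 ->
  sqrt (a * a + b * b) * cos (atan2 b a) = a /\ sqrt (a * a + b * b) * sin (atan2 b a) = b.
Proof.
  intros Hab. unfold atan2.
  assert (Hnorm : forall a, a <> 0 -> sqrt (a * a + b * b) = Rabs a * sqrt (1 + (b / a)²)).
  { intros a' Ha'. rewrite <- sqrt_Rsqr_abs, <- sqrt_mult; [| apply Rle_0_sqr |].
    - f_equal. unfold Rsqr. field. exact Ha'.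
    - pose proof (Rle_0_sqr (b / a')). lra. }
  assert (Hsqrt : 0 < sqrt (1 + (b / a)²)).
  { apply sqrt_lt_R0. pose proof (Rle_0_sqr (b / a)). lra. }
  destruct (Rlt_dec 0 a); [| destruct (Rlt_dec a 0)].
  - rewrite Hnorm, Rabs_right, cos_atan, sin_atan by lra. split; field; lra.
  - rewrite Hnorm, Rabs_left by lra.
    destruct (Rle_dec 0 b).
    + rewrite neg_cos, neg_sin, cos_atan, sin_atan. split; field; lra.
    + replace (atan (b / a) - PI) with ((atan (b / a) + PI) + 2 * PI * IZR (-1)) by (simpl; ring).
      rewrite cos_add_2PI_IZR, sin_add_2PI_IZR, neg_cos, neg_sin, cos_atan, sin_atan.
      split; field; lra.
  - assert (a = 0) by lra. subst a.
    replace (0 * 0 + b * b) with (b²) by (unfold Rsqr; ring). rewrite sqrt_Rsqr_abs.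
    destruct (Rlt_dec 0 b); [| destruct (Rlt_dec b 0)].
    + rewrite cos_PI2, sin_PI2, Rabs_right by lra. split; ring.
    + rewrite cos_neg, sin_neg, cos_PI2, sin_PI2, Rabs_left by lra. split; ring.
    + exfalso. destruct Hab; lra.
Qed.

Lemma atan2_close a b al : (a - cos al) ^ 2 + (b - sin al) ^ 2 < 3 / 4 ->
  cos (atan2 b a - al) > 1 / 2.
Proof.
  intros Hclose.
  pose proof (sin2_cos2 al) as Hunit. unfold Rsqr in Hunit.
  assert (Hab : a <> 0 \/ b <> 0).
  { destruct (Req_dec a 0), (Req_dec b 0); auto. subst. exfalso. nra. }
  destruct (atan2_polar a b Hab) as [Ha Hb].
  set (r := sqrt (a * a + b * b)) in *. set (g := atan2 b a) in *.
  assert (Hr2 : r * r = a * a + b * b) by (apply sqrt_sqrt; nra).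
  assert (Hr : 0 < r) by (apply sqrt_lt_R0; destruct Hab; nra).
  assert (Hinner : 2 * r * cos (g - al) > r * r + 1 / 4).
  { rewrite cos_minus.
    replace (2 * r * (cos g * cos al + sin g * sin al))
      with (2 * (a * cos al + b * sin al)) by (rewrite <- Ha, <- Hb; ring).
    nra. }
  pose proof (pow2_ge_0 (r - 1 / 2)). nra.
Qed.

Definition near (x y : R) : Prop := exists d m, Rabs d < 1 / 6 /\ x = y + d + IZR m.

Lemma cos_gt_half_small d : -1 / 2 <= d <= 1 / 2 -> cos (2 * PI * d) > 1 / 2 -> Rabs d < 1 / 6.
Proof.
  intros Hd Hcos. pose proof PI_RGT_0.
  assert (Habs : cos (2 * PI * Rabs d) > 1 / 2).
  { unfold Rabs; destruct Rcase_abs; [| exact Hcos].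
    now replace (2 * PI * - d) with (- (2 * PI * d)) by ring; rewrite cos_neg. }
  rewrite <- cos_PI3 in Habs.
  assert (Rabs d <= 1 / 2) by (apply Rabs_le; lra).
  pose proof (Rabs_pos d).
  assert (2 * PI * Rabs d < PI / 3) by (apply cos_decreasing_0; nra).
  nra.
Qed.

Lemma near_of_cos x y : cos (2 * PI * (x - y)) > 1 / 2 -> near x y.
Proof.
  intros Hcos. set (m := Int_part (x - y + 1 / 2)).
  pose proof (base_Int_part (x - y + 1 / 2)) as Hm. fold m in Hm.
  exists (x - y - IZR m), m. split; [| ring].
  apply cos_gt_half_small; [lra |].
  replace (2 * PI * (x - y - IZR m)) with (2 * PI * (x - y) + 2 * PI * IZR (- m))
    by (rewrite opp_IZR; ring).
  now rewrite cos_add_2PI_IZR.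
Qed.

Lemma near_add_IZR x y k : near x y -> near (x + IZR k) y.
Proof.
  intros (d & m & Hd & ->). exists d, (m + k)%Z. split; [exact Hd |].
  rewrite plus_IZR; ring.
Qed.

Lemma rmod_eq a c : rmod a c = a + c * IZR (- Int_part (a / c)).
Proof. unfold rmod, rfloor. rewrite opp_IZR. ring. Qed.

(* Below the threshold [3/32], the coordinates [2 n / N - 1] err by less than [sqrt (3/8)],
   so the empirical point lies within [sqrt 3 / 2] of [e^(2 i PI ph)] ([atan2_close]). *)
Definition good_stage (N : nat) (ph : R) (c : nat * nat) : Prop :=
  (INR (fst c) / INR N - pcos ph) ^ 2 < 3 / 32 /\ (INR (snd c) / INR N - psin ph) ^ 2 < 3 / 32.

Lemma xval_near N ph c : (0 < N)%nat -> good_stage N ph c -> near (xval N c) (ph - 1 / 6).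
Proof.
  intros HN [Hx Hy]. destruct c as [nx ny]; simpl in Hx, Hy.
  assert (HNr : 0 < INR N) by (apply lt_0_INR; lia).
  pose proof PI_RGT_0.
  set (g := atan2 (2 * INR ny / INR N - 1) (2 * INR nx / INR N - 1)).
  assert (Hg : cos (g - 2 * PI * ph) > 1 / 2).
  { apply atan2_close.
    replace (2 * INR nx / INR N - 1 - cos (2 * PI * ph))
      with (2 * (INR nx / INR N - pcos ph)) by (unfold pcos; field; lra).
    replace (2 * INR ny / INR N - 1 - sin (2 * PI * ph))
      with (2 * (INR ny / INR N - psin ph)) by (unfold psin; field; lra).
    lra. }
  unfold xval, tval; simpl fst; simpl snd; fold g.
  rewrite rmod_eq, Rmult_1_l. apply near_add_IZR, near_of_cos.
  rewrite rmod_eq.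
  replace (2 * PI * ((g + 2 * PI * IZR (- Int_part (g / (2 * PI)))) / (2 * PI) - 1 / 6
                     - (ph - 1 / 6)))
    with (g - 2 * PI * ph + 2 * PI * IZR (- Int_part (g / (2 * PI)))) by (field; lra).
  now rewrite cos_add_2PI_IZR.
Qed.

Lemma rmod_1_bounds a : 0 <= rmod a 1 < 1.
Proof.
  rewrite rmod_eq, Rdiv_1_r, opp_IZR. pose proof (base_Int_part a). lra.
Qed.

(* In the first branch [zstep z x] inherits the error of [x]; in the other two the branch
   reveals the sign of [e], so the doubled error corrected by [-/+ 1/6] stays below [1/6]. *)
Lemma zstep_near psi z x e K : near x (2 * psi - 1 / 6) -> Rabs e < 1 / 6 ->
  z = psi - 1 / 6 + e + IZR K ->
  exists e', Rabs e' < 1 / 6 /\ zstep z x = 2 * psi - 1 / 6 + e' + 2 * IZR K.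
Proof.
  intros (dx & m & Hdx & Hx) He Hz.
  apply Rabs_def2 in Hdx. apply Rabs_def2 in He.
  unfold zstep. pose proof (rmod_1_bounds (x - 2 * z)) as Hd.
  set (d := rmod (x - 2 * z) 1) in *.
  set (j := (m - 2 * K - Int_part (x - 2 * z))%Z).
  assert (Hdj : d = 1 / 6 + dx - 2 * e + IZR j).
  { unfold d, j. rewrite rmod_eq, Rdiv_1_r, !minus_IZR, mult_IZR, opp_IZR, Hx, Hz. ring. }
  assert (Hj : j = 0%Z \/ j = 1%Z).
  { assert (-1 < IZR j < 2) as [Hlo Hhi] by lra.
    apply lt_IZR in Hlo, Hhi. lia. }
  destruct Hj as [-> | ->]; simpl in Hdj.
  - destruct (Rlt_dec d (1 / 3)); [| destruct (Rlt_dec d (2 / 3)); [| lra]].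
    + exists dx. split; [apply Rabs_def1; lra | rewrite Hz, Hdj; lra].
    + exists (2 * e + 1 / 6). split; [apply Rabs_def1; lra | rewrite Hz; lra].
  - destruct (Rlt_dec d (1 / 3)); [lra |]. destruct (Rlt_dec d (2 / 3)); [lra |].
    exists (2 * e - 1 / 6). split; [apply Rabs_def1; lra | rewrite Hz; lra].
Qed.

Fixpoint chain (psi : R) (xs : list R) : Prop :=
  match xs with
  | nil => True
  | x :: xs' => near x (2 * psi - 1 / 6) /\ chain (2 * psi) xs'
  end.

Lemma fold_zstep_near xs : forall psi z e K, chain psi xs -> Rabs e < 1 / 6 ->
  z = psi - 1 / 6 + e + IZR K ->
  exists e', Rabs e' < 1 / 6 /\
    fold_left zstep xs z = 2 ^ length xs * psi - 1 / 6 + e' + 2 ^ length xs * IZR K.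
Proof.
  induction xs as [| x xs IH]; intros psi z e K Hchain He Hz.
  - exists e. split; [exact He | rewrite Hz; simpl; ring].
  - destruct Hchain as [Hx Hchain].
    destruct (zstep_near psi z x e K Hx He Hz) as (e1 & He1 & Hz1).
    rewrite <- mult_IZR in Hz1.
    destruct (IH (2 * psi) (zstep z x) e1 (2 * K)%Z Hchain He1 Hz1) as (e' & He' & Hfold).
    exists e'. split; [exact He' |]. simpl. rewrite Hfold, mult_IZR. ring.
Qed.

Lemma phases_S l th : phases (S l) th = th :: phases l (2 * th).
Proof.
  unfold phases. rewrite <- seq_shift, map_map. simpl. f_equal; [ring |].
  apply map_ext_in. intros k Hk. apply in_seq in Hk.
  simpl. rewrite Nat.sub_0_r. replace k with (S (k - 1)) at 1 by lia. simpl. ring.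
Qed.

Lemma length_phases l th : length (phases l th) = l.
Proof. unfold phases. now rewrite length_map, length_seq. Qed.

Lemma good_stages_chain N l : (0 < N)%nat -> forall th cs,
  Forall2 (good_stage N) (phases l (2 * th)) cs -> chain th (map (xval N) cs).
Proof.
  intros HN. induction l as [| l IH]; intros th cs Hgood.
  - now inversion Hgood.
  - rewrite phases_S in Hgood. inversion Hgood as [| ph c phs cs' Hc Hrest]; subst.
    split; [now apply xval_near | now apply IH].
Qed.

Lemma fidelity_eq a th : fidelity a th = (1 + cos (2 * PI * (th - a))) / 2.
Proof.
  unfold fidelity. pose proof (sin2_cos2 (2 * PI * (th - a))) as Hunit.
  unfold Rsqr in Hunit. field_simplify. nra.
Qed.

Lemma one_sub_fidelity_le a th m : 1 - fidelity a th <= (PI * (th - a + IZR m)) ^ 2.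
Proof.
  rewrite fidelity_eq, <- (cos_add_2PI_IZR _ m).
  pose proof (one_sub_cos_le (2 * PI * (th - a) + 2 * PI * IZR m)) as Hcos.
  replace ((2 * PI * (th - a) + 2 * PI * IZR m) ^ 2 / 2)
    with (2 * (PI * (th - a + IZR m)) ^ 2) in Hcos by field.
  lra.
Qed.

Lemma estimate_good N l th cs : (0 < N)%nat -> (1 <= l)%nat ->
  Forall2 (good_stage N) (phases l th) cs ->
  1 - fidelity (estimate N l cs) th <= 2 / (2 ^ l) ^ 2.
Proof.
  intros HN Hl Hgood. destruct l as [| l]; [lia |].
  rewrite phases_S in Hgood. inversion Hgood as [| ph c phs cs' Hc Hrest]; subst.
  pose proof (Forall2_length Hrest) as Hlen. rewrite length_phases in Hlen.
  destruct (xval_near N th c HN Hc) as (d & m & Hd & Hx).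
  assert (Hz : xval N c = th - 1 / 6 + d + IZR m) by (rewrite Hx; ring).
  destruct (fold_zstep_near (map (xval N) cs') th (xval N c) d m
              (good_stages_chain N l HN th cs' Hrest) Hd Hz) as (e & He & Hfold).
  rewrite length_map, <- Hlen in Hfold.
  unfold estimate. simpl map. cbn [hd tl]. rewrite Hfold, Nat.sub_1_r. simpl Nat.pred.
  replace (2 / (2 ^ S l) ^ 2) with ((1 / 2) / (2 ^ l) ^ 2)
    by (simpl; field; apply pow_nonzero; lra).
  set (P := 2 ^ l). assert (HP : 0 < P) by (apply pow_lt; lra). clearbody P.
  rewrite rmod_eq, Rdiv_1_r, Rmult_1_l.
  set (k := Int_part ((P * th - 1 / 6 + e + P * IZR m + 1 / 6) / P)).
  eapply Rle_trans; [apply (one_sub_fidelity_le _ _ (m - k)) |].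
  rewrite minus_IZR, opp_IZR.
  replace (th - ((P * th - 1 / 6 + e + P * IZR m + 1 / 6) / P + - IZR k) + (IZR m - IZR k))
    with (- e / P) by (field; lra).
  apply Rabs_def2 in He. pose proof PI_4. pose proof PI_RGT_0.
  replace ((PI * (- e / P)) ^ 2) with ((PI * e) ^ 2 / P ^ 2) by (field; lra).
  apply Rmult_le_compat_r; [left; apply Rinv_0_lt_compat; nra |].
  rewrite Rpow_mult_distr. apply Rle_trans with (16 * (1 / 36)); [| lra].
  apply Rmult_le_compat; nra.
Qed.

Lemma failures_nonneg N phs cs : 0 <= failures N phs cs.
Proof.
  revert cs; induction phs as [| ph phs IH]; intros [| [nx ny] cs]; simpl; try lra.
  specialize (IH cs). unfold deviates. destruct Rle_dec, Rle_dec; lra.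
Qed.

Lemma good_or_failure N phs cs : length cs = length phs ->
  Forall2 (good_stage N) phs cs \/ 1 <= failures N phs cs.
Proof.
  revert cs; induction phs as [| ph phs IH]; intros [| [nx ny] cs] Hlen; try discriminate.
  - left; constructor.
  - injection Hlen as Hlen. simpl. pose proof (failures_nonneg N phs cs).
    unfold deviates. destruct Rle_dec, Rle_dec; try (right; lra).
    destruct (IH cs Hlen); [left | right; lra].
    constructor; [split; simpl; lra | assumption].
Qed.

Lemma infidelity_le_failures N l th cs : (0 < N)%nat -> (1 <= l)%nat -> length cs = l ->
  1 - fidelity (estimate N l cs) th <= 2 / (2 ^ l) ^ 2 + failures N (phases l th) cs.
Proof.
  intros HN Hl Hlen.
  assert (0 < 2 / (2 ^ l) ^ 2) by (apply Rdiv_lt_0_compat; [lra | apply pow_lt, pow_lt; lra]).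
  pose proof (failures_nonneg N (phases l th) cs).
  destruct (good_or_failure N (phases l th) cs) as [Hgood | Hfail].
  - now rewrite length_phases.
  - pose proof (estimate_good N l th cs HN Hl Hgood). lra.
  - rewrite fidelity_eq. pose proof (COS_bound (2 * PI * (th - estimate N l cs))). lra.
Qed.

Lemma expected_infidelity_le l th : (1 <= l)%nat -> (0 < Nsamp l)%nat ->
  1 - expected_fidelity l th
  <= 2 / (2 ^ l) ^ 2 + INR l * (4 * exp (- (2 * INR (Nsamp l) * (3 / 32)))).
Proof.
  intros Hl HN. unfold expected_fidelity.
  set (N := Nsamp l) in *.
  assert (Hmono : expect N (phases l th)
      (fun cs => -1 * failures N (phases l th) cs + (1 - 2 / (2 ^ l) ^ 2))
    <= expect N (phases l th) (fun cs => fidelity (estimate N l cs) th)).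
  { apply expect_mono. intros cs Hlen. rewrite length_phases in Hlen.
    pose proof (infidelity_le_failures N l th cs HN Hl Hlen). lra. }
  rewrite expect_affine in Hmono.
  pose proof (expect_failures N (phases l th) HN) as Hfail.
  rewrite length_phases in Hfail. lra.
Qed.

Lemma ln2_bounds : 1 / 2 < ln 2 < 1.
Proof.
  split.
  - rewrite <- (ln_exp (1 / 2)). apply ln_increasing; [apply exp_pos |].
    assert (exp (1 / 2) * exp (1 / 2) = exp 1) by (rewrite <- exp_plus; f_equal; field).
    pose proof exp_le_3. pose proof (exp_pos (1 / 2)). nra.
  - rewrite <- (ln_exp 1). apply ln_increasing; [lra |].
    pose proof (exp_ineq1 1 ltac:(lra)). lra.
Qed.

Lemma pow2_double l : 2 ^ (2 * l) = (2 ^ l) ^ 2.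
Proof. now rewrite <- pow_mult, Nat.mul_comm. Qed.

Lemma Nsamp_bounds l : (1 <= l)%nat ->
  (0 < Nsamp l)%nat /\ 0 < ln (4 * INR l * (2 ^ l) ^ 2) /\
  534 / 100 * ln (4 * INR l * (2 ^ l) ^ 2) <= INR (Nsamp l) <= 28 * INR l.
Proof.
  intros Hl.
  assert (Hlr : 1 <= INR l) by (apply (le_INR 1); exact Hl).
  assert (HQ : 1 <= 2 ^ l) by (apply pow_R1_Rle; lra).
  set (L := ln (4 * INR l * (2 ^ l) ^ 2)).
  assert (HL : 0 < L) by (unfold L; rewrite <- ln_1; apply ln_increasing; nra).
  assert (HLub : L <= 5 * INR l).
  { unfold L. rewrite !ln_mult, ln_pow, ln_pow by (try apply pow_lt; nra).
    replace 4 with (2 ^ 2) by ring. rewrite ln_pow by lra.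
    pose proof ln2_bounds. pose proof (exp_ineq1_le (ln (INR l))) as Hln.
    rewrite exp_ln in Hln by lra. simpl INR. nra. }
  assert (HN : INR (Nsamp l) = IZR (rceil (534 / 100 * L))).
  { unfold Nsamp. rewrite pow2_double. fold L. rewrite INR_IZR_INZ, Z2Nat.id; [reflexivity |].
    apply le_IZR. unfold rceil. rewrite opp_IZR.
    pose proof (base_Int_part (- (534 / 100 * L))). lra. }
  unfold rceil in HN. rewrite opp_IZR in HN.
  pose proof (base_Int_part (- (534 / 100 * L))).
  repeat split; [apply INR_lt; simpl | ..]; lra.
Qed.

Lemma expected_infidelity_le_inv_sq l th : (1 <= l)%nat ->
  1 - expected_fidelity l th <= 3 / (2 ^ l) ^ 2.
Proof.
  intros Hl. destruct (Nsamp_bounds l Hl) as (HN & HL & HNlo & _).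
  assert (HQ : 0 < 2 ^ l) by (apply pow_lt; lra).
  assert (Hlr : 0 < INR l) by (apply lt_0_INR; lia).
  (* [N >= 5.34 ln (4 l 4^l)] and [2 * (3/32) * 5.34 > 1]. *)
  assert (Hexp : exp (- (2 * INR (Nsamp l) * (3 / 32))) <= / (4 * INR l * (2 ^ l) ^ 2)).
  { rewrite <- (exp_ln (4 * INR l * (2 ^ l) ^ 2)), <- exp_Ropp by (apply Rmult_lt_0_compat; nra).
    apply exp_le_exp. lra. }
  pose proof (expected_infidelity_le l th Hl HN).
  apply Rmult_le_compat_l with (r := 4 * INR l) in Hexp; [| lra].
  replace (4 * INR l * / (4 * INR l * (2 ^ l) ^ 2)) with (1 / (2 ^ l) ^ 2) in Hexp
    by (field; split; lra).
  replace (3 / (2 ^ l) ^ 2) with (2 / (2 ^ l) ^ 2 + 1 / (2 ^ l) ^ 2) by (field; lra).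
  lra.
Qed.

Lemma nuses_eq l : INR (nuses l) = 2 * INR (Nsamp l) * (2 ^ l - 1).
Proof.
  unfold nuses. rewrite !mult_INR, minus_INR, pow_INR, (INR_IZR_INZ 2); [simpl; ring |].
  change 1%nat with (2 ^ 0)%nat. apply Nat.pow_le_mono_r; lia.
Qed.

Lemma inv_pow2_le_ln_nuses l : (1 <= l)%nat ->
  1 / (112 * 2 ^ l) <= ln (INR (nuses l)) / INR (nuses l).
Proof.
  intros Hl. destruct (Nsamp_bounds l Hl) as (HN & _ & _ & HNhi).
  assert (Hlr : 1 <= INR l) by (apply (le_INR 1); exact Hl).
  assert (HQ : 2 <= 2 ^ l)
    by (replace 2 with (2 ^ 1) at 1 by ring; apply Rle_pow; [lra | exact Hl]).
  assert (HN1 : 1 <= INR (Nsamp l)) by (apply (le_INR 1); exact HN).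
  pose proof (nuses_eq l) as Hn. set (n := INR (nuses l)) in *.
  assert (Hn_lo : 2 ^ l <= n) by nra.
  assert (Hn_hi : n <= 56 * INR l * 2 ^ l) by nra.
  assert (Hln : INR l / 2 <= ln n).
  { apply Rle_trans with (ln (2 ^ l)).
    - rewrite ln_pow by lra. pose proof ln2_bounds. nra.
    - destruct (Req_dec (2 ^ l) n) as [<- | Hne]; [lra |].
      left; apply ln_increasing; lra. }
  apply Rle_trans with ((INR l / 2) / (56 * INR l * 2 ^ l)); [right; field; lra |].
  unfold Rdiv. apply Rmult_le_compat; [lra | left; apply Rinv_0_lt_compat; nra | exact Hln |].
  apply Rinv_le_contravar; nra.
Qed.

Theorem mainTheorem5 :
  exists C : R, 0 < C /\
    forall (l : nat), (1 <= l)%nat ->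
    forall th : R, 0 <= th < 1 ->
      1 - expected_fidelity l th <=
        C * (ln (INR (nuses l)) / INR (nuses l)) ^ 2.
Proof.
  exists (3 * 112 ^ 2). split; [lra |]. intros l Hl th _.
  assert (HQ : 0 < 2 ^ l) by (apply pow_lt; lra).
  apply Rle_trans with (3 * 112 ^ 2 * (1 / (112 * 2 ^ l)) ^ 2).
  - replace (3 * 112 ^ 2 * (1 / (112 * 2 ^ l)) ^ 2) with (3 / (2 ^ l) ^ 2) by (field; lra).
    now apply expected_infidelity_le_inv_sq.
  - apply Rmult_le_compat_l; [lra |]. apply pow_incr. split.
    + left. apply Rdiv_lt_0_compat; lra.
    + now apply inv_pow2_le_ln_nuses.
Qed.
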